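(* Let $\alpha$ be a graph function on a strongly connected digraph $G$, with heights $y$, levels $x$, momenta $m$ and raising imbalances $\rho_v=\rho^R_v$; let $y_{\min}=\min_u y_u$. For every vertex $v$: (i) $m_v\le\rho(S_v)+z_v$; (ii) $y_v-y_{\min}\le|S_v|\cdot\rho(S_v)$.
   Context: $G$ is a strongly connected directed graph (self-loops allowed); $u\to v$ means $(u,v)$ is an edge. A graph function assigns a real weight $\alpha_{uv}$ to each edge. $\alpha_v^{\text{in}}=\max_{u\to v}\alpha_{uv}$, $\alpha_v^{\text{out}}=\max_{v\to w}\alpha_{vw}$, $\rho^R_v=\max\{0,\alpha_v^{\text{out}}-\alpha_v^{\text{in}}\}$. A raising operation at $v$: if $\rho^R_v>0$ add $\rho^R_v/2$ to each incoming edge weight $\alpha_{uv}$ ($u\ne v$) and subtract it from each outgoing $\alpha_{vw}$ ($w\neq v$); otherwise do nothing. Starting from $\alpha$, for any infinite sequence of raising operations in which every vertex occurs infinitely often, the cumulative amount by which each vertex has been raised converges to a limit vector $r^*$ independent of the sequence, and the graph functions converge to the raising-balanced graph function $\alpha^R_{uv}=\alpha_{uv}+r^*_v-r^*_u$. Heights: $y_v=-r^*_v$. Levels: $x_v=\max_{u\to v}\alpha^R_{uv}$. Momentum: $m_v=\max_{u\to v}(\alpha_{uv}-x_v)$. $S_v=\{u: y_u<y_v\}$, $\rho(S_v)=\sum_{u\in S_v}\rho_u$, and $z_v=\max\{x_u: y_u\le y_v\}-x_v$. *)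

From HB Require Import structures.
From mathcomp Require Import all_boot all_order all_algebra.
From mathcomp Require Import all_classical all_reals.
From mathcomp Require Import all_analysis.
Import numFieldNormedType.Exports.
Set Implicit Arguments. Unset Strict Implicit. Unset Printing Implicit Defensive.
Import Order.TTheory GRing.Theory Num.Theory.
Local Open Scope classical_set_scope.
Local Open Scope ring_scope.

Section Graphs.
Variables (R : realType) (V : finType) (E : rel V).

(* maximum / minimum of a finite list (0 on the empty list; only ever used
   on nonempty lists in the statement) *)
Definition maxs (s : seq R) : R := foldr Num.max (head 0 s) s.
Definition mins (s : seq R) : R := foldr Num.min (head 0 s) s.

Definition strongly_connected : Prop := forall u v : V, connect E u v.

Definition alpha_in (a : V -> V -> R) (v : V) : R :=
  maxs [seq a u v | u <- enum V & E u v].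
Definition alpha_out (a : V -> V -> R) (v : V) : R :=
  maxs [seq a v w | w <- enum V & E v w].

Definition rhoR (a : V -> V -> R) (v : V) : R :=
  Num.max 0 (alpha_out a v - alpha_in a v).

Definition raise (a : V -> V -> R) (v : V) : V -> V -> R :=
  fun p q => a p q
    + (if (q == v) && (p != v) then rhoR a v / 2 else 0)
    - (if (p == v) && (q != v) then rhoR a v / 2 else 0).

Fixpoint raise_state (a : V -> V -> R) (s : nat -> V) (n : nat) : V -> V -> R :=
  match n with
  | 0 => a
  | n'.+1 => raise (raise_state a s n') (s n')
  end.

Definition cum_raise (a : V -> V -> R) (s : nat -> V) (n : nat) (v : V) : R :=
  \sum_(k < n | s k == v) rhoR (raise_state a s k) v / 2.

Definition fair (s : nat -> V) : Prop :=
  forall (v : V) (N : nat), exists2 n, (N <= n)%N & s n = v.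

Definition is_raising_limit (a : V -> V -> R) (r : V -> R) : Prop :=
  forall s : nat -> V, fair s ->
    forall v : V, (fun n => cum_raise a s n v) @ \oo --> r v.

Definition alphaR (a : V -> V -> R) (r : V -> R) : V -> V -> R :=
  fun u v => a u v + r v - r u.

Definition height (r : V -> R) (v : V) : R := - r v.
Definition level (a : V -> V -> R) (r : V -> R) (v : V) : R :=
  alpha_in (alphaR a r) v.
Definition momentum (a : V -> V -> R) (r : V -> R) (v : V) : R :=
  maxs [seq a u v - level a r v | u <- enum V & E u v].
Definition Sset (r : V -> R) (v : V) : {set V} :=
  [set u | height r u < height r v].
Definition rhoS (a : V -> V -> R) (r : V -> R) (v : V) : R :=
  \sum_(u in Sset r v) rhoR a u.
Definition zval (a : V -> V -> R) (r : V -> R) (v : V) : R :=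
  maxs [seq level a r u | u <- enum V & height r u <= height r v]
  - level a r v.
Definition ymin (r : V -> R) : R := mins [seq height r u | u <- enum V].

End Graphs.

From HB Require Import structures.
From mathcomp Require Import all_boot all_order all_algebra.
From mathcomp Require Import all_classical all_reals.
From mathcomp Require Import all_analysis.
From mathcomp Require Import lra.
Import numFieldNormedType.Exports.
Import Order.TTheory GRing.Theory Num.Theory.
Set Implicit Arguments. Unset Strict Implicit. Unset Printing Implicit Defensive.
Local Open Scope ring_scope.

(* The raising limit r is the least nonnegative potential for which
   alphaR = a + r_v - r_u is balanced (alpha_out <= alpha_in everywhere): every
   raising step stays below any such potential, and the imbalances met along a
   fair sequence vanish in the limit.
   Following maximal incoming edges backwards from u only increases r, and each
   step costs at most the imbalance rho of the vertex it leaves; so a weight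
   a_uw is at most the sum of rho over {t | r_u <= r_t} plus the largest level
   there, which gives (i).
   For (ii), minimality forbids a nonempty set of vertices of common level L
   and positive r that tight edges (alphaR = L) never leave: lowering r on it
   by e * 2 ^ #(tight ancestors) would keep alphaR balanced. Hence some s with
   r_v < r_s has a tight edge to a vertex b with r_b <= r_v, which forces
   r_s - r_v <= rho(S_v), and (ii) follows by induction on |S_v|. *)

Section ListExtrema.
Variable R : realType.
Implicit Types (s : seq R) (x y : R).

Lemma foldr_max_ge x0 s y : y \in x0 :: s -> y <= foldr Num.max x0 s.
Proof.
elim: s => [|z s IH] /=; first by rewrite inE => /eqP->.
rewrite le_max !inE => /or3P[yx0|/eqP->|ys]; last 2 first.
- by rewrite lexx.
- by rewrite IH ?orbT // inE ys orbT.
by rewrite IH ?orbT // inE yx0.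
Qed.

Lemma foldr_max_in x0 s : foldr Num.max x0 s \in x0 :: s.
Proof.
elim: s => [|z s IH] /=; first exact: mem_head.
rewrite /Num.max !inE; case: ifP => _; last by rewrite eqxx orbT.
by move: IH; rewrite inE => /orP[->|->]; rewrite ?orbT.
Qed.

Lemma foldr_min_in x0 s : foldr Num.min x0 s \in x0 :: s.
Proof.
elim: s => [|z s IH] /=; first exact: mem_head.
rewrite /Num.min !inE; case: ifP => _; first by rewrite eqxx orbT.
by move: IH; rewrite inE => /orP[->|->]; rewrite ?orbT.
Qed.

Lemma maxs_ge s y : y \in s -> y <= maxs s.
Proof. by case: s => // h t yt; apply: foldr_max_ge; rewrite inE yt orbT. Qed.

Lemma maxs_in s y : y \in s -> maxs s \in s.
Proof.
case: s => // h t _; have := foldr_max_in h (h :: t).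
by rewrite /maxs inE => /orP[/eqP->|//]; apply: mem_head.
Qed.

Lemma maxs_le s y z : y \in s -> (forall y', y' \in s -> y' <= z) -> maxs s <= z.
Proof. by move=> /maxs_in sm; apply. Qed.

Lemma mins_in s y : y \in s -> mins s \in s.
Proof.
case: s => // h t _; have := foldr_min_in h (h :: t).
by rewrite /mins inE => /orP[/eqP->|//]; apply: mem_head.
Qed.

End ListExtrema.

Section NonnegSum.
Variables (R : numDomainType) (I : finType) (F : I -> R).
Hypothesis F_ge0 : forall i, 0 <= F i.

Lemma sumr_le_subpred (P Q : pred I) :
  (forall i, P i -> Q i) -> \sum_(i | P i) F i <= \sum_(i | Q i) F i.
Proof.
move=> PQ; rewrite big_mkcond [leRHS]big_mkcond /=; apply: ler_sum => i _.
by case: ifP => [/PQ->|_]; last case: ifP.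
Qed.

Lemma sumr_le_subpredD1 (P Q : pred I) j :
  (forall i, P i -> Q i) -> Q j -> ~~ P j ->
  F j + \sum_(i | P i) F i <= \sum_(i | Q i) F i.
Proof.
move=> PQ Qj Pj; rewrite [leRHS](bigD1 j) //= lerD2l.
apply: sumr_le_subpred => i Pi; rewrite PQ //=.
by apply: contraNneq Pj => <-.
Qed.

End NonnegSum.

Lemma mem_map_filter (T : finType) (U : eqType) (f : T -> U) (P : pred T) t :
  P t -> f t \in [seq f u | u <- enum T & P u].
Proof. by move=> Pt; apply: map_f; rewrite mem_filter Pt mem_enum. Qed.

Lemma exists_pos_lb (R : realDomainType) (T : finType) (P : pred T) (d : T -> R) :
  (forall t, P t -> 0 < d t) -> exists2 e, 0 < e & forall t, P t -> e <= d t.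
Proof.
move=> d_gt0; exists (\big[Order.min/1]_(t | P t) d t); first exact: lt_bigmin.
by move=> t Pt; apply: bigmin_le_cond.
Qed.

Section GraphFunction.
Variables (R : realType) (V : finType) (E : rel V).
Implicit Types (b c : V -> V -> R) (u v w : V).

Lemma alpha_in_ge b u v : E u v -> b u v <= alpha_in E b v.
Proof. by move=> Euv; apply/maxs_ge/(mem_map_filter (b^~ v)). Qed.

Lemma alpha_out_ge b v w : E v w -> b v w <= alpha_out E b v.
Proof. by move=> Evw; apply/maxs_ge/(mem_map_filter (b v)). Qed.

Lemma rhoR_ge0 b v : 0 <= rhoR E b v.
Proof. by rewrite le_max lexx. Qed.

Lemma rhoR_ge b v : alpha_out E b v - alpha_in E b v <= rhoR E b v.
Proof. by rewrite le_max lexx orbT. Qed.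

Definition balanced b := forall v, alpha_out E b v <= alpha_in E b v.

Hypothesis hin : forall v, exists u, E u v.
Hypothesis hout : forall v, exists w, E v w.

Lemma alpha_in_attained b v : exists2 u, E u v & b u v = alpha_in E b v.
Proof.
have [u0 /(mem_map_filter (b^~ v) (P := E^~ v))/maxs_in] := hin v.
case/mapP => u; rewrite mem_filter => /andP[Euv _] eq.
by exists u => //; rewrite /alpha_in eq.
Qed.

Lemma alpha_out_attained b v : exists2 w, E v w & b v w = alpha_out E b v.
Proof.
have [w0 /(mem_map_filter (b v))/maxs_in] := hout v.
case/mapP => w; rewrite mem_filter => /andP[Evw _] eq.
by exists w => //; rewrite /alpha_out eq.
Qed.

Lemma alpha_in_le_shift b c d v :
  (forall u, E u v -> b u v <= c u v + d) -> alpha_in E b v <= alpha_in E c v + d.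
Proof.
move=> bc; have [u Euv <-] := alpha_in_attained b v.
by apply: le_trans (bc u Euv) _; rewrite lerD2r alpha_in_ge.
Qed.

Lemma alpha_out_le b v z : (forall w, E v w -> b v w <= z) -> alpha_out E b v <= z.
Proof. by move=> bz; have [w Evw <-] := alpha_out_attained b v; apply: bz. Qed.

Lemma alpha_out_le_shift b c d v :
  (forall w, E v w -> b v w <= c v w + d) -> alpha_out E b v <= alpha_out E c v + d.
Proof.
move=> bc; apply: alpha_out_le => w Evw.
by apply: le_trans (bc w Evw) _; rewrite lerD2r alpha_out_ge.
Qed.

Lemma balancedP b :
  (forall v, exists2 u, E u v & forall w, E v w -> b v w <= b u v) -> balanced b.
Proof.
move=> hb v; have [u Euv ub] := hb v.
by apply: alpha_out_le => w /ub/le_trans; apply; apply: alpha_in_ge.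
Qed.

End GraphFunction.

Section UpperChain.
Variables (R : realType) (V : finType) (E : rel V) (a : V -> V -> R) (r : V -> R).
Hypothesis hin : forall v, exists u, E u v.
Local Notation rho := (rhoR E a).
Local Notation x := (level E a r).

Lemma in_Sset v t : (t \in Sset r v) = (r v < r t).
Proof. by rewrite inE /height ltrN2. Qed.

Lemma card_Sset_lt u p : r u < r p -> (#|Sset r p| < #|Sset r u|)%N.
Proof.
move=> up; apply: proper_card; apply/properP; split.
  by apply/fintype.subsetP => t; rewrite !in_Sset; apply: lt_trans.
by exists p; rewrite !in_Sset ?ltxx.
Qed.

Lemma rhoS_ge0 v : 0 <= rhoS E a r v.
Proof. by apply: sumr_ge0 => t _; apply: rhoR_ge0. Qed.

Lemma weight_le_level p u : r p <= r u -> E p u -> a p u <= x u.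
Proof.
move=> pu /(alpha_in_ge (alphaR a r)); apply: le_trans.
by rewrite /alphaR -addrA lerDl subr_ge0.
Qed.

Lemma weight_le_upper_sum u w M : E u w -> (forall t, r u <= r t -> x t <= M) ->
  a u w <= \sum_(t | r u <= r t) rho t + M.
Proof.
move=> Euw hM; have [n] := ubnP #|Sset r u|.
elim: n => // n IH in u w Euw hM *; rewrite ltnS => hn.
have [p Epu pu] := alpha_in_attained hin a u.
have a_uw : a u w <= a p u + rho u.
  by have := alpha_out_ge a Euw; have := rhoR_ge E a u; rewrite -pu; lra.
apply: le_trans a_uw _; rewrite addrC.
case: (leP (r p) (r u)) => [pu_le|up_lt].
  rewrite (bigD1 u) //= -addrA lerD2l -[a p u]add0r lerD ?sumr_ge0 //.
    by move=> t _; apply: rhoR_ge0.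
  by apply/le_trans/hM/lexx; apply: weight_le_level.
have hMp t : r p <= r t -> x t <= M by move=> pt; apply/hM/ltW/lt_le_trans/pt.
have := IH p u Epu hMp (leq_trans (card_Sset_lt up_lt) hn).
move=> /(lerD (lexx (rho u)))/le_trans; apply.
rewrite addrA lerD2r; apply: sumr_le_subpredD1 => //; last by rewrite -ltNge.
  exact: rhoR_ge0.
by move=> t; apply/le_trans/ltW.
Qed.

Lemma momentum_le v : momentum E a r v <= rhoS E a r v + zval E a r v.
Proof.
rewrite /zval; set Z := maxs _.
have hZ t : r v <= r t -> x t <= Z.
  by move=> vt; apply/maxs_ge/(mem_map_filter x); rewrite /height lerN2.
have [u0 /(mem_map_filter (fun u => a u v - x v) (P := E^~ v))] := hin v.
move=> /maxs_le; apply => y /mapP[u]; rewrite mem_filter => /andP[Euv _] ->.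
rewrite addrA lerD2r; case: (leP (r u) (r v)) => [uv|vu].
  by apply: ler_wpDl (rhoS_ge0 v) _; apply/le_trans/hZ/lexx; apply: weight_le_level.
apply: le_trans (weight_le_upper_sum Euv _) _.
  by move=> t ut; apply/hZ/ltW/lt_le_trans/ut.
rewrite lerD2r; apply: sumr_le_subpred => [t|t ut]; first exact: rhoR_ge0.
by rewrite in_Sset (lt_le_trans vu).
Qed.

End UpperChain.

Section Ancestors.
Variables (T : finType) (D : rel T).

Definition ancestors q : {set T} := [set p | [exists z, connect D p z && D z q]].

Lemma connect_last p q : connect D p q -> p = q \/ exists2 z, connect D p z & D z q.
Proof.
case/connectP => s; elim/last_ind: s => [_ ->|s z _]; first by left.
rewrite rcons_path last_rcons => /andP[ps Dz] ->; right; exists (last p s) => //.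
by apply/connectP; exists s.
Qed.

Lemma ancestors_sub q w : D q w -> ancestors q \subset ancestors w.
Proof.
move=> Dqw; apply/fintype.subsetP => p; rewrite !inE => /existsP[z /andP[pz Dzq]].
by apply/existsP; exists q; rewrite Dqw andbT (connect_trans pz) ?connect1.
Qed.

Lemma mem_ancestors q w : D q w -> q \in ancestors w.
Proof. by move=> Dqw; rewrite inE; apply/existsP; exists q; rewrite connect0. Qed.

Lemma ancestors_cycle q :
  q \in ancestors q -> exists2 p, D p q & ancestors q \subset ancestors p.
Proof.
rewrite inE => /existsP[p /andP[qp Dpq]]; exists p => //.
case: (connect_last qp) => [<-|[z qz Dzp]]; first exact: subxx.
apply/fintype.subsetP => t; rewrite !inE => /existsP[t' /andP[tt' Dt'q]].
apply/existsP; exists z; rewrite Dzp andbT.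
exact: connect_trans (connect_trans tt' (connect1 Dt'q)) qz.
Qed.

(* phi t := 2 ^ #|ancestors t|: ancestor sets grow along D, strictly unless q
   lies on a D-cycle, where its predecessor on the cycle has no fewer. *)
Lemma doubling_potential (R : realDomainType) : exists phi : T -> R,
  (forall t, 0 < phi t) /\ forall q,
    (exists2 p, D p q & forall w, D q w -> 2 * phi q <= phi p + phi w) \/
    (forall w, D q w -> 2 * phi q <= phi w).
Proof.
exists (fun t => 2 ^+ #|ancestors t|); split=> [t|q]; first exact: exprn_gt0.
have le_anc (A B : {set T}) : A \subset B -> 2 ^+ #|A| <= 2 ^+ #|B| :> R.
  by move=> /subset_leq_card; rewrite ler_eXn2l ?ltr1n.
have [/ancestors_cycle[p Dpq /le_anc qp]|qq] := boolP (q \in ancestors q).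
  by left; exists p => // w /ancestors_sub/le_anc qw; lra.
right=> w Dqw; rewrite -exprS ler_eXn2l ?ltr1n //.
apply: proper_card; apply/properP; split; first exact: ancestors_sub.
by exists q => //; apply: mem_ancestors.
Qed.

End Ancestors.

Section MinimalBalanced.
Variables (R : realType) (V : finType) (E : rel V) (a : V -> V -> R) (r : V -> R).
Hypothesis hin : forall v, exists u, E u v.
Hypothesis hout : forall v, exists w, E v w.
Hypothesis r_ge0 : forall v, 0 <= r v.
Hypothesis r_balanced : balanced E (alphaR a r).
Hypothesis r_least : forall c : V -> R,
  (forall t, 0 <= c t) -> balanced E (alphaR a c) -> forall t, r t <= c t.
Local Notation ar := (alphaR a r).
Local Notation x := (level E a r).

Lemma balanced_lower (X : {set V}) L (psi : V -> R) :
    (forall t, 0 <= psi t) -> (forall t, t \notin X -> psi t = 0) ->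
    (forall q w, q \in X -> E q w -> ar q w <= L) ->
    (forall q w, q \in X -> E q w -> ar q w < L -> 2 * psi q <= L - ar q w) ->
    (forall q, q \in X -> exists2 u, E u q & ar u q = L /\
       forall w, E q w -> ar q w = L -> 2 * psi q <= psi u + psi w) ->
  balanced E (alphaR a (fun t => r t - psi t)).
Proof.
move=> psi_ge0 psi0 ar_le gap tight; apply: balancedP => // q.
have ar' p p' : alphaR a (fun t => r t - psi t) p p' = ar p p' - psi p' + psi p.
  by rewrite /alphaR; lra.
have [Xq|nXq] := boolP (q \in X).
  have [u Euq [aruq hu]] := tight q Xq; exists u => // w Eqw.
  rewrite !ar' aruq; have := psi_ge0 u; have := psi_ge0 w.
  have [lt|ge] := ltP (ar q w) L; first by have := gap q w Xq Eqw lt; lra.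
  have arqw : ar q w = L by apply/eqP; rewrite eq_le ar_le.
  by have := hu w Eqw arqw; lra.
have [u Euq aruq] := alpha_in_attained hin ar q; exists u => // w Eqw.
have := r_balanced q; have := alpha_out_ge ar Eqw; have := psi_ge0 u.
by have := psi_ge0 w; rewrite !ar' (psi0 q nXq) -aruq; lra.
Qed.

Lemma tight_closed_empty (X : {set V}) L :
  (forall q, q \in X -> 0 < r q /\ x q = L) ->
  (forall q w, q \in X -> E q w -> ar q w = L -> w \in X) -> forall t, t \notin X.
Proof.
move=> hX closedX t0; apply/negP => Xt0.
have ar_le_L q w : q \in X -> E q w -> ar q w <= L.
  move=> /hX[_ <-] /(alpha_out_ge ar)/le_trans; apply; exact: r_balanced.
pose D := [rel p q | [&& p \in X, q \in X, E p q & ar p q == L]].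
have [phi [phi_gt0 hphi]] := doubling_potential D R.
(* e keeps r - psi nonnegative and every non-tight edge out of X non-tight. *)
pose d qw := Num.min (r qw.1 / phi qw.1) (if E qw.1 qw.2 && (ar qw.1 qw.2 < L)
  then (L - ar qw.1 qw.2) / (2 * phi qw.1) else 1).
have [e e_gt0 he] : exists2 e, 0 < e & forall qw, qw.1 \in X -> e <= d qw.
  apply: exists_pos_lb => -[q w] /= /hX[rq _]; rewrite lt_min divr_gt0 //=.
  by case: ifP => // /andP[_ lt]; rewrite divr_gt0 ?mulr_gt0 ?subr_gt0.
have scale A B : A <= B -> e * A <= e * B by apply: ler_wpM2l; apply: ltW.
pose psi t := if t \in X then e * phi t else 0.
have psi_ge0 t : 0 <= psi t.
  by rewrite /psi; case: ifP => // _; rewrite mulr_ge0 ?ltW.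
have r'_ge0 t : 0 <= r t - psi t.
  rewrite /psi subr_ge0; case: ifP => // Xt.
  by move: (he (t, t) Xt); rewrite le_min ler_pdivlMr // => /andP[].
suff r'_balanced : balanced E (alphaR a (fun t => r t - psi t)).
  have := r_least r'_ge0 r'_balanced t0; rewrite /psi Xt0.
  by have := mulr_gt0 e_gt0 (phi_gt0 t0); lra.
apply: (@balanced_lower X L) => // [t /negbTE|q w Xq Eqw lt|q Xq].
- by rewrite /psi => ->.
- move: (he (q, w) Xq); rewrite /d /= Eqw lt le_min /psi Xq => /andP[_].
  by rewrite ler_pdivlMr ?mulr_gt0 // mulrCA.
have xq : x q = L by have [] := hX q Xq.
have D_tight w : E q w -> ar q w = L -> D q w.
  by move=> Eqw arqw; rewrite /= Xq Eqw arqw eqxx (closedX q w).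
rewrite /psi Xq; have [[p /and4P[Xp _ Epq /eqP arpq] hp]|hw] := hphi q.
  exists p => //; split=> // w Eqw arqw; have /and4P[_ Xw _ _] := D_tight w Eqw arqw.
  by rewrite Xp Xw mulrCA -mulrDr; apply/scale/hp/D_tight.
have [u Euq aruq] := alpha_in_attained hin ar q.
exists u => //; split=> [|w Eqw arqw]; first by rewrite aruq.
have /and4P[_ Xw _ _] := D_tight w Eqw arqw; rewrite Xw mulrCA.
by have := psi_ge0 u; have := scale _ _ (hw w (D_tight w Eqw arqw)); rewrite /psi; lra.
Qed.

Lemma exit_edge v : (exists t, r v < r t) -> exists s b,
  [/\ r v < r s, E s b, r b <= r v & forall t, r v < r t -> x t <= ar s b].
Proof.
move=> [t1 vt1]; pose L := maxs [seq x t | t <- enum V & r v < r t].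
have x_le_L t : r v < r t -> x t <= L by move=> vt; apply/maxs_ge/(mem_map_filter x).
have [t0 vt0 xt0] : exists2 t0, r v < r t0 & x t0 = L.
  have /mapP[t0] := maxs_in (mem_map_filter x (P := fun t => r v < r t) vt1).
  by rewrite mem_filter => /andP[vt0 _] eq; exists t0.
apply: contrapT => no_exit.
suff /(_ t0) : forall t, t \notin [set t | (r v < r t) && (x t == L)].
  by rewrite inE vt0 xt0 eqxx.
apply: (tight_closed_empty (L := L)) => [q|q w]; rewrite !inE => /andP[vq /eqP xq].
  by split=> //; apply: le_lt_trans (r_ge0 v) vq.
move=> Eqw arqw; have vw : r v < r w.
  rewrite ltNge; apply/negP => wv; apply: no_exit; exists q, w; split=> // t vt.
  by rewrite arqw; apply: x_le_L.
by rewrite vw eq_le x_le_L //= -arqw; apply: alpha_in_ge.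
Qed.

Lemma upper_gap v : (exists t, r v < r t) ->
  exists2 s, r v < r s & r s - r v <= rhoS E a r v.
Proof.
move=> /exit_edge[s [b [vs Esb bv hb]]]; exists s => //.
have := weight_le_upper_sum hin Esb (fun t st => hb t (lt_le_trans vs st)).
have : \sum_(t | r s <= r t) rhoR E a t <= rhoS E a r v.
  apply: sumr_le_subpred => [t|t st]; first exact: rhoR_ge0.
  by rewrite in_Sset (lt_le_trans vs).
by rewrite /alphaR; lra.
Qed.

Lemma upper_spread v u : r u - r v <= #|Sset r v|%:R * rhoS E a r v.
Proof.
have [n] := ubnP #|Sset r v|; elim: n => // n IH in v u *; rewrite ltnS => hn.
have Sv_ge0 : 0 <= #|Sset r v|%:R * rhoS E a r v by rewrite mulr_ge0 ?rhoS_ge0.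
have [uv|vu] := leP (r u) (r v); first lra.
have [s vs gap] := upper_gap (ex_intro _ u vu).
have Ssv := card_Sset_lt vs.
have := IH s u (leq_trans Ssv hn).
have rhoS_sv : rhoS E a r s <= rhoS E a r v.
  apply: sumr_le_subpred => [t|t]; first exact: rhoR_ge0.
  by rewrite !in_Sset; apply: lt_trans.
have := ler_wpM2l (ler0n R #|Sset r s|) rhoS_sv.
have : (#|Sset r s|%:R + 1) * rhoS E a r v <= #|Sset r v|%:R * rhoS E a r v.
  by rewrite ler_wpM2r ?rhoS_ge0 // natr1 ler_nat.
lra.
Qed.

End MinimalBalanced.

Local Open Scope classical_set_scope.

Section Raising.
Variables (R : realType) (V : finType) (E : rel V) (a : V -> V -> R).

Lemma alphaR_close (c c' : V -> R) d p q :
  (forall t, `|c t - c' t| <= d) -> alphaR a c p q <= alphaR a c' p q + 2 * d.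
Proof.
move=> cc'; have := cc' p; have := cc' q; rewrite !ler_norml /alphaR.
by move=> /andP[? ?] /andP[? ?]; lra.
Qed.

Section Cumulative.
Variable s : nat -> V.
Local Notation c := (cum_raise E a s).

Lemma cum_raiseS n v :
  c n.+1 v = c n v + (if s n == v then rhoR E (raise_state E a s n) v / 2 else 0).
Proof. by rewrite /cum_raise big_mkcond big_ord_recr /= -big_mkcond. Qed.

Lemma cum_raise0 v : c 0 v = 0.
Proof. by rewrite /cum_raise big_ord0. Qed.

Lemma raise_stateE n : raise_state E a s n = alphaR a (c n).
Proof.
elim: n => [|n IH]; apply/funext => p; apply/funext => q.
  by rewrite /alphaR !cum_raise0 subr0 addr0.
rewrite /= IH /raise /alphaR !cum_raiseS IH ![s n == _]eq_sym.
by case: (eqVneq q (s n)) => [->|nq]; case: (eqVneq p (s n)) => [->|np];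
  rewrite ?eqxx ?(negbTE nq) ?(negbTE np) /=; lra.
Qed.

Lemma cum_raise_ge0 n v : 0 <= c n v.
Proof. by apply: sumr_ge0 => k _; rewrite divr_ge0 ?rhoR_ge0. Qed.

Lemma cum_raise_nondecreasing v : nondecreasing_seq (c^~ v).
Proof.
apply/nondecreasing_seqP => n; rewrite cum_raiseS lerDl.
by case: ifP => _ //; rewrite divr_ge0 ?rhoR_ge0.
Qed.

End Cumulative.

Hypothesis hin : forall v, exists u, E u v.
Hypothesis hout : forall v, exists w, E v w.

Lemma raise_le_balanced (c c' : V -> R) v :
  (forall t, c t <= c' t) -> balanced E (alphaR a c') ->
  c v + rhoR E (alphaR a c) v / 2 <= c' v.
Proof.
move=> cc' bal'; pose d := c' v - c v.
have out_le : alpha_out E (alphaR a c) v <= alpha_out E (alphaR a c') v + d.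
  by apply: alpha_out_le_shift => // w _; have := cc' w; rewrite /d /alphaR; lra.
have in_le : alpha_in E (alphaR a c') v <= alpha_in E (alphaR a c) v + d.
  by apply: alpha_in_le_shift => // u _; have := cc' u; rewrite /d /alphaR; lra.
suff: rhoR E (alphaR a c) v <= 2 * d by rewrite /d; lra.
have d_ge0 : 0 <= d by rewrite subr_ge0.
by rewrite ge_max mulr_ge0 //=; have := bal' v; lra.
Qed.

Section FairLimit.
Variables (s : nat -> V) (r : V -> R).
Hypothesis s_fair : fair s.
Hypothesis cum_cvg : forall v, (fun n => cum_raise E a s n v) @ \oo --> r v.
Local Notation c := (cum_raise E a s).

Lemma raising_limit_ge0 v : 0 <= r v.
Proof. by apply: cvgr_to_ge (@cum_cvg v) _; apply: nearW => n; apply: cum_raise_ge0. Qed.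

Lemma cum_raise_le_limit n v : c n v <= r v.
Proof.
apply: cvgr_to_ge (@cum_cvg v) _; near=> m.
by apply: cum_raise_nondecreasing; near: m; apply: nbhs_infty_ge.
Unshelve. all: by end_near.
Qed.

Lemma raising_limit_least c' : (forall t, 0 <= c' t) -> balanced E (alphaR a c') ->
  forall t, r t <= c' t.
Proof.
move=> c'_ge0 bal' t; apply: cvgr_to_le (@cum_cvg t) _; apply: nearW => n.
elim: n t => [|n IH] t; first by rewrite cum_raise0.
rewrite cum_raiseS; case: eqP => [<-|_]; last by rewrite addr0.
by rewrite raise_stateE; apply: raise_le_balanced.
Qed.

Lemma raising_limit_balanced : balanced E (alphaR a r).
Proof.
move=> v; rewrite -subr_le0; apply/ler_addgt0Pr => e e_gt0; rewrite add0r.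
have : \forall n \near \oo, forall t, `|r t - c n t| <= e / 6.
  apply: filter_forall => t.
  by apply: (cvgrPdist_le _ _).1 (@cum_cvg t) _ _; rewrite divr_gt0.
case=> N _ closeN; have [n Nn snv] := s_fair v N.
have close := closeN n Nn; have close' t : `|c n t - r t| <= e / 6 by rewrite distrC.
have out_le : alpha_out E (alphaR a r) v <= alpha_out E (alphaR a (c n)) v + 2 * (e / 6).
  by apply: alpha_out_le_shift => // w _; apply: alphaR_close.
have in_le : alpha_in E (alphaR a (c n)) v <= alpha_in E (alphaR a r) v + 2 * (e / 6).
  by apply: alpha_in_le_shift => // u _; apply: alphaR_close.
have rho_le : rhoR E (alphaR a (c n)) v <= 2 * (r v - c n v).
  by have := cum_raise_le_limit n.+1 v; rewrite cum_raiseS snv eqxx raise_stateE; lra.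
have := rhoR_ge E (alphaR a (c n)) v; have := close v; rewrite ler_norml; lra.
Qed.

End FairLimit.
End Raising.

Definition round_robin (V : finType) (v0 : V) (n : nat) : V :=
  nth v0 (enum V) (n %% #|V|).

Lemma round_robin_fair (V : finType) (v0 : V) : fair (round_robin v0).
Proof.
move=> w N; have V_gt0 : (0 < #|V|)%N by apply/card_gt0P; exists v0.
have iw : (index w (enum V) < #|V|)%N by rewrite cardE index_mem mem_enum.
exists (N * #|V| + index w (enum V))%N.
  by apply: leq_trans (leq_addr _ _); apply: leq_pmulr.
by rewrite /round_robin modnMDl modn_small // nth_index // mem_enum.
Qed.

Lemma strongly_connected_out (V : finType) (E : rel V) :
  strongly_connected E -> (forall v, exists u, E u v) -> forall v, exists w, E v w.
Proof.
move=> hsc hin v; have [u Euv] := hin v.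
case/connectP: (hsc v u) => -[/= _ uv|w p /= /andP[Evw _] _]; last by exists w.
by exists v; rewrite -[X in E X _]uv.
Qed.

Unset Implicit Arguments.
Theorem lemma6 (R : realType) (V : finType) (E : rel V)
  (a : V -> V -> R) (r : V -> R)
  (hsc : strongly_connected E)
  (hin : forall v : V, exists u : V, E u v)
  (hr : is_raising_limit E a r) :
  forall v : V,
    momentum E a r v <= rhoS E a r v + zval E a r v /\
    height r v - ymin r <= (#|Sset r v|)%:R * rhoS E a r v.
Proof.
move=> v; have hout := strongly_connected_out hsc hin.
have s_fair := round_robin_fair v; have cum_cvg := hr _ s_fair.
have r_ge0 := raising_limit_ge0 cum_cvg.
have r_balanced := raising_limit_balanced hin hout s_fair cum_cvg.
have r_least := raising_limit_least hin hout cum_cvg.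
split; first exact: momentum_le.
have /mapP[u _ ->] : ymin r \in [seq height r u | u <- enum V].
  by apply: (mins_in (y := height r v)); apply: map_f; rewrite mem_enum.
by rewrite /height opprK addrC; apply: upper_spread.
Qed.
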